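(* Let $\mathcal{A}$ be the Weyl arrangement of type $A_3$, realized in $\mathbb{K}^3$ as the six hyperplanes $x=0$, $y=0$, $z=0$, $x=y$, $y=z$, $x=z$. Let $m$ be a multiplicity on $\mathcal{A}$ such that $(\mathcal{A},m)$ is unbalanced. Then the freeness of $(\mathcal{A},m)$ depends only on $L(\mathcal{A})$ together with the values $m(H)$, $H\in\mathcal{A}$. Precisely: let $(\mathcal{A}',m')$ be a multiarrangement in $\mathbb{K}^3$ and $\varphi:\mathcal{A}\to\mathcal{A}'$ a bijection such that $m'(\varphi(H))=m(H)$ for all $H$ and $\operatorname{codim}\bigcap_{H\in\mathcal{B}}H=\operatorname{codim}\bigcap_{H\in\mathcal{B}}\varphi(H)$ for every subset $\mathcal{B}\subseteq\mathcal{A}$. Then $(\mathcal{A},m)$ is free if and only if $(\mathcal{A}',m')$ is free.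
   Context: Let $\mathbb{K}$ be a field. A multiarrangement $(\mathcal{A},m)$ in $V=\mathbb{K}^3$ is a finite set $\mathcal{A}$ of linear hyperplanes, each $H$ with a fixed defining linear form $\alpha_H$, together with a multiplicity $m:\mathcal{A}\to\mathbb{Z}_{>0}$; write $|m|=\sum_H m(H)$. $L(\mathcal{A})$ is the set of intersections of subsets of $\mathcal{A}$. $(\mathcal{A},m)$ is free if $D(\mathcal{A},m)=\{\theta\in\mathrm{Der}_{\mathbb{K}}(\mathbb{K}[x,y,z]):\theta(\alpha_H)\in\alpha_H^{m(H)}\mathbb{K}[x,y,z]\ \forall H\}$ is a free module. A hyperplane $H_0$ is heavy if $2m(H_0)\ge|m|$, and $(\mathcal{A},m)$ is unbalanced if it has a heavy hyperplane. *)

From HB Require Import structures.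
From mathcomp Require Import all_boot all_order all_algebra.
From mathcomp Require Import mpoly.
Set Implicit Arguments. Unset Strict Implicit. Unset Printing Implicit Defensive.
Import GRing.Theory.
Local Open Scope ring_scope.

Section MultiArr.
Variable K : fieldType.

Definition S := {mpoly K[3]}.

(* A linear form on V = K^3 is a row vector a; its value at v : 'rV_3 is
   v *m a^T.  The hyperplane H = ker a, as a subspace (row space) of K^3. *)
Definition hyp (a : 'rV[K]_3) : 'M[K]_3 := kermx a^T.

Definition codim_cap (I : finType) (alpha : I -> 'rV[K]_3) (B : {set I}) : nat :=
  (3 - \rank (\bigcap_(i in B) hyp (alpha i))%MS)%N.

Definition linpoly (a : 'rV[K]_3) : S := \sum_(j < 3) (a 0 j)%:MP * 'X_j.

(* K-derivations of S: Der_K(S) is the free S-module on d/dx, d/dy, d/dz;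
   theta = \sum_j theta_j d/dX_j is stored as its coefficient triple. *)
Definition Der := 'I_3 -> S.

Definition der_app (theta : Der) (a : 'rV[K]_3) : S :=
  \sum_(j < 3) (a 0 j)%:MP * theta j.

Definition mdvd (p f : S) : Prop := exists q : S, f = p * q.

Definition is_multiarr (I : finType) (alpha : I -> 'rV[K]_3) (m : I -> nat) : Prop :=
  [/\ forall i, alpha i != 0,
      forall i j, i != j -> ~~ (hyp (alpha i) == hyp (alpha j))%MS
    & forall i, (0 < m i)%N].

Definition in_D (I : finType) (alpha : I -> 'rV[K]_3) (m : I -> nat) (theta : Der) : Prop :=
  forall i, mdvd (linpoly (alpha i) ^+ m i) (der_app theta (alpha i)).

Definition free_multiarr (I : finType) (alpha : I -> 'rV[K]_3) (m : I -> nat) : Prop :=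
  exists (n : nat) (b : 'I_n -> Der),
    [/\ forall k, in_D alpha m (b k),
        forall theta, in_D alpha m theta ->
          exists c : 'I_n -> S, forall j, theta j = \sum_(k < n) c k * b k j
      & forall c : 'I_n -> S,
          (forall j, \sum_(k < n) c k * b k j = 0) -> forall k, c k = 0].

Definition heavy (I : finType) (m : I -> nat) (H0 : I) : Prop :=
  (\sum_(i : I) m i <= 2 * m H0)%N.

Definition unbalanced (I : finType) (m : I -> nat) : Prop :=
  exists H0, heavy m H0.

Definition ev (j : 'I_3) : 'rV[K]_3 := delta_mx 0 j.
Definition A3 (i : 'I_6) : 'rV[K]_3 :=
  match val i with
  | 0 => ev 0
  | 1 => ev 1
  | 2 => ev 2%:R
  | 3 => ev 0 - ev 1
  | 4 => ev 1 - ev 2%:R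
  | _ => ev 0 - ev 2%:R
  end.

End MultiArr.

From HB Require Import structures.
From mathcomp Require Import all_boot all_order all_algebra.
From mathcomp Require Import mpoly ring zify.
Import GRing.Theory.
Local Open Scope ring_scope.
Set Implicit Arguments. Unset Strict Implicit.

(* After
   moving x, y, z to the coordinate forms, the dependent triples {x, y, x-y}, {y, z, y-z},
   {x, z, x-z} put the three remaining forms in the coordinate planes, and the fourth
   dependent triple {x-y, y-z, x-z} leaves exactly the freedom of a diagonal change of
   coordinates and a rescaling of each form.  A linear automorphism g of K^3 acts on S by
   substitution and on derivations by conjugation; since rescaling a form does not change
   the divisibility conditions, conjugation maps D(A, m) onto D(gA, m) and S-bases to
   S-bases. *)

Lemma comp_mpolyA (n k l : nat) (R : comNzRingType) (p : {mpoly R[n]})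
    (lq : n.-tuple {mpoly R[k]}) (lr : k.-tuple {mpoly R[l]}) :
  (p \mPo lq) \mPo lr = p \mPo [tuple tnth lq i \mPo lr | i < n].
Proof.
rewrite [p \mPo lq]comp_mpolyEX raddf_sum /= [RHS]comp_mpolyEX; apply: eq_bigr => m _.
rewrite comp_mpolyZ !comp_mpolyX rmorph_prod /=; congr (_ *: _).
by apply: eq_bigr => i _; rewrite rmorphXn /= tnth_map tnth_ord_tuple.
Qed.

Section LinearSubstitution.
Variable K : fieldType.
Implicit Types (G N M : 'M[K]_3) (a : 'rV[K]_3) (th : Der K) (p q : S K).

Lemma der_app_delta th j : der_app th (delta_mx 0 j) = th j.
Proof.
rewrite /der_app (bigD1 j) //= big1 ?addr0 => [|k /negbTE kj].
  by rewrite mxE !eqxx mpolyC1 mul1r.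
by rewrite mxE eqxx kj mpolyC0 mul0r.
Qed.

Lemma der_appZ th (c : K) a : der_app th (c *: a) = c%:MP * der_app th a.
Proof.
rewrite /der_app mulr_sumr; apply: eq_bigr => j _.
by rewrite mxE mpolyCM mulrA.
Qed.

Lemma der_app_mulmx th a M :
  der_app th (a *m M) = \sum_(j < 3) (a 0 j)%:MP * der_app th (row j M).
Proof.
rewrite /der_app; under [RHS]eq_bigr do rewrite mulr_sumr.
rewrite exchange_big; apply: eq_bigr => k _.
rewrite mxE (big_morph _ (@mpolyCD _ _) (@mpolyC0 _ _)) mulr_suml.
by apply: eq_bigr => j _; rewrite mxE mpolyCM mulrA.
Qed.

Lemma der_app_lincomb n (c : 'I_n -> S K) (b : 'I_n -> Der K) a :
  der_app (fun j => \sum_(k < n) c k * b k j) a = \sum_(k < n) c k * der_app (b k) a.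
Proof.
rewrite /der_app; under eq_bigr do rewrite mulr_sumr.
rewrite exchange_big; apply: eq_bigr => k _; rewrite mulr_sumr.
by apply: eq_bigr => j _; rewrite mulrCA.
Qed.

Lemma linpolyE a : linpoly a = der_app (fun j => 'X_j) a.
Proof. by []. Qed.

Lemma eq_der_app th th' a : th =1 th' -> der_app th a = der_app th' a.
Proof. by move=> e; apply: eq_bigr => j _; rewrite e. Qed.

Definition lin_subst G p : S K := p \mPo [tuple linpoly (row i G) | i < 3].

HB.instance Definition _ G :=
  GRing.RMorphism.copy (lin_subst G) (comp_mpoly [tuple linpoly (row i G) | i < 3]).

Lemma lin_substC G (c : K) : lin_subst G c%:MP = c%:MP.
Proof. exact: comp_mpolyC. Qed.

Lemma lin_substX G j : lin_subst G 'X_j = linpoly (row j G).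
Proof. by rewrite /lin_subst comp_mpolyXU -tnth_nth tnth_map tnth_ord_tuple. Qed.

Lemma lin_subst_linpoly G a : lin_subst G (linpoly a) = linpoly (a *m G).
Proof.
rewrite {1}/linpoly rmorph_sum [RHS]linpolyE der_app_mulmx.
by apply: eq_bigr => j _; rewrite rmorphM /= lin_substC lin_substX.
Qed.

Lemma lin_subst_comp G M p : lin_subst M (lin_subst G p) = lin_subst (G *m M) p.
Proof.
rewrite /lin_subst comp_mpolyA; congr comp_mpoly; apply: eq_from_tnth => i.
by rewrite !tnth_map !tnth_ord_tuple -/(lin_subst M _) lin_subst_linpoly row_mul.
Qed.

Lemma lin_subst1 p : lin_subst 1%:M p = p.
Proof.
rewrite /lin_subst -[RHS]comp_mpoly_id; congr comp_mpoly; apply: eq_from_tnth => i.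
by rewrite !tnth_map !tnth_ord_tuple row1 linpolyE der_app_delta.
Qed.

(* With sigma_M := lin_subst M, the derivation [der_conj G N th] maps X_j to
   sigma_G (th (sigma_N X_j)); for N = G^-1 it is the conjugate of th by sigma_G. *)
Definition der_conj G N th : Der K := fun j => lin_subst G (der_app th (row j N)).

Lemma der_app_conj G N th a :
  der_app (der_conj G N th) a = lin_subst G (der_app th (a *m N)).
Proof.
rewrite der_app_mulmx rmorph_sum; apply: eq_bigr => j _.
by rewrite rmorphM /= lin_substC.
Qed.

Lemma der_conjK G N th : G *m N = 1%:M -> der_conj N G (der_conj G N th) =1 th.
Proof.
move=> GN j; rewrite /der_conj der_app_conj lin_subst_comp -row_mul GN.
by rewrite lin_subst1 row1 der_app_delta.
Qed.

Lemma eq_der_conj G N th th' : th =1 th' -> der_conj G N th =1 der_conj G N th'.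
Proof. by move=> e j; rewrite /der_conj (eq_der_app _ e). Qed.

Lemma der_conj_lincomb G N n (c : 'I_n -> S K) (b : 'I_n -> Der K) j :
  der_conj G N (fun l => \sum_(k < n) c k * b k l) j
  = \sum_(k < n) lin_subst G (c k) * der_conj G N (b k) j.
Proof. by rewrite /der_conj der_app_lincomb rmorph_sum; under eq_bigr do rewrite rmorphM. Qed.

Lemma der_conj0 G N j : der_conj G N (fun => 0) j = 0.
Proof. by rewrite /der_conj /der_app big1 ?rmorph0 // => k _; rewrite mulr0. Qed.

Lemma mdvd_conj G (c : K) (L f : S K) k : c != 0 -> mdvd (L ^+ k) f ->
  mdvd ((c%:MP * lin_subst G L) ^+ k) (c%:MP * lin_subst G f).
Proof.
move=> c0 [q ->]; exists (((c^-1) ^+ k)%:MP * c%:MP * lin_subst G q).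
have cK : c%:MP * (c^-1)%:MP = 1 :> S K by rewrite -mpolyCM divff ?mpolyC1.
rewrite rmorphM rmorphXn /= rmorphXn /= -[LHS]mul1r -(expr1n _ k) -cK !exprMn.
ring.
Qed.

End LinearSubstitution.

Section FreenessTransfer.
Variable K : fieldType.
Implicit Types (G N : 'M[K]_3).

Definition lin_image (I I' : finType) G (al : I -> 'rV[K]_3) (m : I -> nat)
    (al' : I' -> 'rV[K]_3) (m' : I' -> nat) : Prop :=
  forall i', exists i, exists c : K,
    [/\ c != 0, al' i' = c *: (al i *m G) & m' i' = m i].

Lemma in_D_conj (I I' : finType) G N (al : I -> 'rV[K]_3) (m : I -> nat)
    (al' : I' -> 'rV[K]_3) (m' : I' -> nat) th :
  G *m N = 1%:M -> lin_image G al m al' m' -> in_D al m th -> in_D al' m' (der_conj G N th).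
Proof.
move=> GN img thD i'; have [i [c [c0 -> ->]]] := img i'.
rewrite der_app_conj -scalemxAl -mulmxA GN mulmx1 der_appZ rmorphM /= lin_substC.
by rewrite linpolyE der_appZ -linpolyE -lin_subst_linpoly; apply: mdvd_conj.
Qed.

Lemma free_multiarr_lin_image (I I' : finType) G N (al : I -> 'rV[K]_3) (m : I -> nat)
    (al' : I' -> 'rV[K]_3) (m' : I' -> nat) :
  G *m N = 1%:M -> N *m G = 1%:M ->
  lin_image G al m al' m' -> lin_image N al' m' al m ->
  free_multiarr al m -> free_multiarr al' m'.
Proof.
move=> GN NG img img' [n [b [bD b_span b_free]]].
exists n, (fun k => der_conj G N (b k)); split.
- by move=> k; apply: in_D_conj.
- move=> th' th'D; have [c th'E] := b_span _ (in_D_conj NG img' th'D).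
  exists (fun k => lin_subst G (c k)) => j.
  by rewrite -(der_conjK th' NG j) (eq_der_conj _ _ th'E) der_conj_lincomb.
- move=> c c0 k.
  have cN0 j : \sum_(k < n) lin_subst N (c k) * b k j = 0.
    rewrite -[RHS](der_conj0 N G j) -(eq_der_conj _ _ c0) der_conj_lincomb.
    by apply: eq_bigr => l _; rewrite der_conjK.
  by rewrite -[c k]lin_subst1 -NG -lin_subst_comp (b_free _ cN0) rmorph0.
Qed.

End FreenessTransfer.

Section ThreeByThree.
Variable K : fieldType.
Implicit Types (a b c d e f g h k : K) (u v w : 'rV[K]_3) (M : 'M[K]_3).

Definition row3 a b c : 'rV[K]_3 := \row_j [:: a; b; c]`_j.
Definition rows3 u v w : 'M[K]_3 := \matrix_(i < 3) [:: u; v; w]`_i.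

Lemma row3_eta u : u = row3 (u 0 0) (u 0 1) (u 0 2%:R).
Proof. by apply/rowP => -[[|[|[|//]]] j3]; rewrite !mxE /=; congr (u 0 _); apply: val_inj. Qed.

Lemma scale_row3 k a b c : k *: row3 a b c = row3 (k * a) (k * b) (k * c).
Proof. by apply/rowP => -[[|[|[|//]]] j3]; rewrite !mxE. Qed.

Lemma row3_mul_diag a b c d e f :
  row3 a b c *m diag_mx (row3 d e f) = row3 (a * d) (b * e) (c * f).
Proof. by apply/rowP => -[[|[|[|//]]] j3]; rewrite mul_mx_diag !mxE. Qed.

Lemma rows3_mul u v w M : rows3 u v w *m M = rows3 (u *m M) (v *m M) (w *m M).
Proof. by apply/row_matrixP => -[[|[|[|//]]] i3]; rewrite row_mul !rowK. Qed.

Lemma rows3_inj u v w u' v' w' :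
  rows3 u v w = rows3 u' v' w' -> [/\ u = u', v = v' & w = w'].
Proof.
move=> e; have r (l : 'I_3) := congr1 (row l) e.
by move: (r 0) (r 1) (r 2%:R); rewrite !rowK.
Qed.

Lemma rows3_1 : 1%:M = rows3 (row3 1 0 0) (row3 0 1 0) (row3 0 0 1).
Proof. by apply/matrixP => -[[|[|[|//]]] ?] [[|[|[|//]]] ?]; rewrite !mxE. Qed.

Lemma det_rows3 a b c d e f g h k :
  \det (rows3 (row3 a b c) (row3 d e f) (row3 g h k))
  = a * e * k + b * f * g + c * d * h - a * f * h - b * d * k - c * e * g.
Proof.
rewrite (expand_det_row _ 0) !big_ord_recl big_ord0 /cofactor.
rewrite !(expand_det_row _ 0) !big_ord_recl !big_ord0 /cofactor !det_mx11 !mxE /=.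
by rewrite /bump /=; ring.
Qed.

Lemma det_rows3_e12 u : \det (rows3 u (row3 0 1 0) (row3 0 0 1)) = u 0 0.
Proof. by rewrite [u]row3_eta det_rows3 !mxE /=; ring. Qed.

Lemma det_rows3_e02 u : \det (rows3 (row3 1 0 0) u (row3 0 0 1)) = u 0 1.
Proof. by rewrite [u]row3_eta det_rows3 !mxE /=; ring. Qed.

Lemma det_rows3_e01 u : \det (rows3 (row3 1 0 0) (row3 0 1 0) u) = u 0 2%:R.
Proof. by rewrite [u]row3_eta det_rows3 !mxE /=; ring. Qed.

Definition same_indep_triples (I : Type) (a b : I -> 'rV[K]_3) : Prop :=
  forall i1 i2 i3 : I,
  (\det (rows3 (a i1) (a i2) (a i3)) != 0) = (\det (rows3 (b i1) (b i2) (b i3)) != 0).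

Lemma rank3_det M : (\rank M == 3)%N = (\det M != 0).
Proof. by rewrite -[(_ == _)%N]/(row_free M) row_free_unit unitmxE unitfE. Qed.

End ThreeByThree.

Section CodimensionOfIntersections.
Variable K : fieldType.

Lemma mulmx_tr_eq0C p q (A : 'M[K]_(p, 3)) (B : 'M[K]_(q, 3)) :
  (A *m B^T == 0) = (B *m A^T == 0).
Proof. by rewrite -(inj_eq (@trmx_inj _ _ _)) trmx_mul trmxK trmx0. Qed.

Lemma codim_cap_sum (I : finType) (f : I -> 'rV[K]_3) (B : {set I}) :
  codim_cap f B = \rank (\sum_(i in B) <<f i>>)%MS.
Proof.
set Sm := (\sum_(i in B) <<f i>>)%MS.
have capE : (\bigcap_(i in B) hyp (f i) :=: kermx Sm^T)%MS.
  apply/eqmxP/andP; split.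
    rewrite sub_kermx mulmx_tr_eq0C -sub_kermx; apply/sumsmx_subP => i iB.
    rewrite genmxE sub_kermx mulmx_tr_eq0C -sub_kermx.
    exact: (bigcapmx_inf i).
  apply/sub_bigcapmxP => i iB; rewrite /hyp sub_kermx.
  have /submxP[D ->] : (f i <= Sm)%MS by rewrite (sumsmx_sup i) ?genmxE.
  by rewrite trmx_mul mulmxA mulmx_ker mul0mx.
rewrite /codim_cap capE mxrank_ker mxrank_tr.
have := rank_leq_col Sm; lia.
Qed.

Lemma codim_cap3 (I : finType) (f : I -> 'rV[K]_3) (i j k : I) :
  codim_cap f [set i; j; k] = \rank (rows3 (f i) (f j) (f k)).
Proof.
rewrite codim_cap_sum; apply/eqP; rewrite eqn_leq !mxrankS //.
  apply/row_subP => -[[|[|[|//]]] l3]; rewrite rowK /=.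
  - by rewrite (sumsmx_sup i) ?genmxE // !inE eqxx.
  - by rewrite (sumsmx_sup j) ?genmxE // !inE eqxx ?orbT.
  - by rewrite (sumsmx_sup k) ?genmxE // !inE eqxx ?orbT.
apply/sumsmx_subP => l; rewrite !inE -orbA genmxE.
case/or3P => /eqP->.
- by apply: (@eq_row_sub _ _ _ _ _ 0); rewrite rowK.
- by apply: (@eq_row_sub _ _ _ _ _ 1); rewrite rowK.
- by apply: (@eq_row_sub _ _ _ _ _ 2%:R); rewrite rowK.
Qed.

Lemma same_indep_triples_codim (I : finType) (a b : I -> 'rV[K]_3) :
  (forall B, codim_cap a B = codim_cap b B) -> same_indep_triples a b.
Proof. by move=> ab i j k; rewrite -!rank3_det -!codim_cap3 ab. Qed.

Lemma same_indep_triples_mulmx (I : Type) (a b : I -> 'rV[K]_3) M :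
  M \in unitmx -> same_indep_triples a b -> same_indep_triples a (fun i => b i *m M).
Proof.
move=> Mu ab i j k; have dM : \det M != 0 by rewrite -unitfE -unitmxE.
by rewrite ab /= -rows3_mul det_mulmx mulf_eq0 negb_or dM andbT.
Qed.

End CodimensionOfIntersections.

Section RigidityOfA3.
Variable K : fieldType.

Local Notation o0 := (@Ordinal 6 0 isT).
Local Notation o1 := (@Ordinal 6 1 isT).
Local Notation o2 := (@Ordinal 6 2 isT).
Local Notation o3 := (@Ordinal 6 3 isT).
Local Notation o4 := (@Ordinal 6 4 isT).
Local Notation o5 := (@Ordinal 6 5 isT).

Lemma A3E i : A3 K i = [:: row3 1 0 0; row3 0 1 0; row3 0 0 1;
                           row3 1 (-1) 0; row3 0 1 (-1); row3 1 0 (-1)]`_i.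
Proof.
case: i => [[|[|[|[|[|[|//]]]]]] i6]; apply/rowP => -[[|[|[|//]]] j3];
  by rewrite !mxE /= ?subr0 ?sub0r.
Qed.

Definition A3_config (p q r s t : K) (i : 'I_6) : 'rV[K]_3 :=
  [:: row3 1 0 0; row3 0 1 0; row3 0 0 1;
      row3 p q 0; row3 0 r s; row3 t 0 (- (q * s * t) / (p * r))]`_i.

Lemma A3_config_lin_image (p q r s t : K) :
  p != 0 -> q != 0 -> r != 0 -> s != 0 -> t != 0 ->
  exists2 D : 'M[K]_3, D \in unitmx & exists2 c : 'I_6 -> K,
    (forall i, c i != 0) & forall i, A3_config p q r s t i = c i *: (A3 K i *m D).
Proof.
move=> p0 q0 r0 s0 t0.
exists (diag_mx (row3 p (- q) (q * s / r))).
  rewrite unitmxE unitfE det_diag !big_ord_recl big_ord0 !mxE /= mulr1.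
  by rewrite !mulf_neq0 ?oppr_eq0 ?invr_eq0.
exists (fun i => [:: p^-1; - q^-1; r / (q * s); 1; - (r / q); t / p]`_i).
  case=> [[|[|[|[|[|[|//]]]]]] i6] /=;
    by rewrite ?(oppr_eq0, invr_eq0, mulf_eq0, oner_eq0, negbTE p0, negbTE q0, negbTE r0,
                 negbTE s0, negbTE t0).
case=> [[|[|[|[|[|[|//]]]]]] i6]; rewrite A3E /= row3_mul_diag scale_row3;
  congr row3; field; by rewrite ?p0 ?q0 ?r0 ?s0.
Qed.

Lemma A3_normal_form (y : 'I_6 -> 'rV[K]_3) :
  y o0 = row3 1 0 0 -> y o1 = row3 0 1 0 -> y o2 = row3 0 0 1 ->
  same_indep_triples (A3 K) y ->
  exists p q r s t : K, [/\ p != 0, q != 0, r != 0, s != 0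
    & t != 0 /\ y =1 A3_config p q r s t].
Proof.
move=> y0 y1 y2 Ay.
have dep i j k : \det (rows3 (A3 K i) (A3 K j) (A3 K k)) = 0 ->
    \det (rows3 (y i) (y j) (y k)) = 0.
  by move=> A0; apply/eqP; rewrite -[_ == 0]negbK -Ay A0 eqxx.
have indep i j k : \det (rows3 (A3 K i) (A3 K j) (A3 K k)) != 0 ->
    \det (rows3 (y i) (y j) (y k)) != 0.
  by rewrite Ay.
have w3 : y o3 0 2%:R = 0.
  by rewrite -det_rows3_e01 -y0 -y1; apply: dep; rewrite !A3E det_rows3_e01 !mxE.
have w4 : y o4 0 0 = 0.
  by rewrite -det_rows3_e12 -y1 -y2; apply: dep; rewrite !A3E det_rows3_e12 !mxE.
have w5 : y o5 0 1 = 0.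
  by rewrite -det_rows3_e02 -y0 -y2; apply: dep; rewrite !A3E det_rows3_e02 !mxE.
have p0 : y o3 0 0 != 0.
  by rewrite -det_rows3_e12 -y1 -y2; apply: indep; rewrite !A3E det_rows3_e12 !mxE oner_eq0.
have q0 : y o3 0 1 != 0.
  rewrite -det_rows3_e02 -y0 -y2; apply: indep.
  by rewrite !A3E det_rows3_e02 !mxE oppr_eq0 oner_eq0.
have r0 : y o4 0 1 != 0.
  by rewrite -det_rows3_e02 -y0 -y2; apply: indep; rewrite !A3E det_rows3_e02 !mxE oner_eq0.
have s0 : y o4 0 2%:R != 0.
  rewrite -det_rows3_e01 -y0 -y1; apply: indep.
  by rewrite !A3E det_rows3_e01 !mxE oppr_eq0 oner_eq0.
have t0 : y o5 0 0 != 0.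
  by rewrite -det_rows3_e12 -y1 -y2; apply: indep; rewrite !A3E det_rows3_e12 !mxE oner_eq0.
have y3E : y o3 = row3 (y o3 0 0) (y o3 0 1) 0 by rewrite -w3 -row3_eta.
have y4E : y o4 = row3 0 (y o4 0 1) (y o4 0 2%:R) by rewrite -w4 -row3_eta.
have y5E : y o5 = row3 (y o5 0 0) 0 (y o5 0 2%:R) by rewrite -w5 -row3_eta.
move: p0 q0 r0 s0 t0 y3E y4E y5E.
set p : K := y o3 0 0; set q : K := y o3 0 1; set r : K := y o4 0 1.
set s : K := y o4 0 2%:R; set t : K := y o5 0 0; set u : K := y o5 0 2%:R.
move=> p0 q0 r0 s0 t0 y3E y4E y5E.
have uE : u = - (q * s * t) / (p * r).
  have := dep o3 o4 o5; rewrite !A3E y3E y4E y5E !det_rows3 => cyc.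
  apply: (canRL (mulfK (mulf_neq0 p0 r0))); apply/eqP.
  by rewrite -subr_eq0 opprK -(cyc _); [apply/eqP |]; ring.
exists p, q, r, s, t; split=> //; split=> // -[[|[|[|[|[|[|//]]]]]] i6];
  by rewrite (bool_irrelevance i6 isT) /A3_config /= ?y0 ?y1 ?y2 ?y3E ?y4E ?y5E ?uE.
Qed.

Lemma A3_rigid (a : 'I_6 -> 'rV[K]_3) :
  (forall B, codim_cap (A3 K) B = codim_cap a B) ->
  exists2 G : 'M[K]_3, G \in unitmx &
    exists2 c : 'I_6 -> K, (forall i, c i != 0) & forall i, a i = c i *: (A3 K i *m G).
Proof.
move=> /same_indep_triples_codim Aa.
set A := rows3 (a o0) (a o1) (a o2).
have Au : A \in unitmx by rewrite unitmxE unitfE -Aa !A3E det_rows3_e01 mxE oner_eq0.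
pose y i := a i *m invmx A.
have Ay : same_indep_triples (A3 K) y by apply: same_indep_triples_mulmx; rewrite ?unitmx_inv.
have [y0 y1 y2] : [/\ y o0 = row3 1 0 0, y o1 = row3 0 1 0 & y o2 = row3 0 0 1].
  by apply: rows3_inj; rewrite -rows3_mul mulmxV // rows3_1.
have [p [q [r [s [t [p0 q0 r0 s0 [t0 yE]]]]]]] := A3_normal_form y0 y1 y2 Ay.
have [D Du [c c0 DE]] := A3_config_lin_image p0 q0 r0 s0 t0.
exists (D *m A); first by rewrite unitmx_mul Du Au.
by exists c => // i; rewrite -[a i](mulmxKV Au) -/(y i) yE DE -scalemxAl mulmxA.
Qed.

End RigidityOfA3.

Theorem corollary1p4 (K : fieldType) (m : 'I_6 -> nat)
  (I' : finType) (alpha' : I' -> 'rV[K]_3) (m' : I' -> nat) (phi : 'I_6 -> I') :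
  is_multiarr (@A3 K) m ->
  unbalanced m ->
  is_multiarr alpha' m' ->
  bijective phi ->
  (forall H, m' (phi H) = m H) ->
  (forall B : {set 'I_6}, codim_cap (@A3 K) B = codim_cap (fun H => alpha' (phi H)) B) ->
  (free_multiarr (@A3 K) m <-> free_multiarr alpha' m').
Proof.
move=> _ _ _ [psi phiK psiK] m_phi codim_phi.
have [G Gu [c c0 alphaE]] := A3_rigid codim_phi.
have GN : G *m invmx G = 1%:M by rewrite mulmxV.
have NG : invmx G *m G = 1%:M by rewrite mulVmx.
have img : lin_image G (@A3 K) m alpha' m'.
  move=> i'; exists (psi i'), (c (psi i')).
  by rewrite -alphaE -m_phi psiK.
have img' : lin_image (invmx G) alpha' m' (@A3 K) m.
  move=> i; exists (phi i), (c i)^-1; split; rewrite ?invr_eq0 //.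
  by rewrite alphaE -scalemxAl -mulmxA GN mulmx1 scalerA mulVf // scale1r.
by split; [apply: (free_multiarr_lin_image GN NG) | apply: (free_multiarr_lin_image NG GN)].
Qed.
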